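(* In the construction described in the context, fix $i\ge2$. For $2\le k\le i$ let $T_{ik}=D_iD_{i-1}\cdots D_k\le G_i$. Then: (a) each $T_{ik}$ is normal in $G_i$; (b) each $T_{ik}$ is complemented in $G_i$ by the subgroup $G_{k-1}$; (c) $[T_{ik},R_{k-1}]=T_{ik}$.
   Context: For a group $X$ acted on by a group $Y$, $[X,Y]$ denotes the subgroup generated by all $x^{-1}x^{y}$. A finite $p$-group $P$ is extra-special if $P'=Z(P)$ has order $p$. Construction: let $p_1,p_2,\dots$ be an infinite sequence of primes with $p_{i+1}\ne p_i$ for all $i$. Define finite groups $G_1\le G_2\le\cdots$ and subgroups $R_i\le G_i$ recursively. Let $G_1=R_1$ be cyclic of order $p_1$. For $i\ge2$: let $M_i$ be an extra-special group of order $p_i^3$; let $B$ be the base group of the regular wreath product $M_i\wr G_{i-1}$ (direct product of $|G_{i-1}|$ copies of $M_i$, permuted regularly by $G_{i-1}$); let $B_i=B/[B',G_{i-1}]$ with the induced $G_{i-1}$-action; $D_i=[B_i,R_{i-1}]$; $G_i=D_i\rtimes G_{i-1}$; $R_i=D_i'$. Each $D_j$ ($j\le i$) is regarded as a subgroup of $G_j\le G_i$. *)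

From HB Require Import structures.
From mathcomp Require Import all_boot all_order all_fingroup all_solvable.
Set Implicit Arguments. Unset Strict Implicit. Unset Printing Implicit Defensive.
Local Open Scope group_scope.

Section Step.
Variables (sT : finGroupType) (G : {group sT}) (mT : finGroupType) (M : {group mT}).
Definition Xt := subg_of G.
Definition Bt := {dffun forall x : subg_of G, subg_of M}.
Definition wr_act (f : Bt) (g : subg_of G) : Bt := [ffun x => f (x * g^-1)].
Lemma wr_act1 : wr_act^~ 1 =1 id.
Proof. by move=> f; apply/ffunP=> x; rewrite ffunE invg1 mulg1. Qed.
Lemma wr_actM f : act_morph wr_act f.
Proof. by move=> a b; apply/ffunP=> x; rewrite !ffunE invMg mulgA. Qed.
Definition wr_action := TotalAction wr_act1 wr_actM.
Lemma wr_is_groupAction : is_groupAction [set: Bt] wr_action.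
Proof.
move=> a _; rewrite inE; apply/andP; split.
  by apply/subsetP=> x; rewrite inE.
apply/morphicP=> f h _ _; rewrite !actpermE; apply/ffunP=> x.
by rewrite /= /wr_act !ffunE.
Qed.
Definition wr_gaction := GroupAction wr_is_groupAction.
Definition St := sdprod_by wr_gaction.
Definition wrB : {set St} := sdpair1 wr_gaction @* [set: Bt].
Definition wrG : {set St} := sdpair2 wr_gaction @* [set: subg_of G].
Definition wrK : {set St} := [~: wrB^`(1), wrG].
Definition Qt := coset_of wrK.
Definition emb (g : sT) : Qt := coset wrK (sdpair2 wr_gaction (subg G g)).
Variable R : {set sT}.
Definition newD : {group Qt} := [group of [~: wrB / wrK, emb @: R]].
Definition newG : {group Qt} := [group of newD <*> emb @: G].
Definition newR : {group Qt} := [group of newD^`(1)].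
End Step.

Record stage := Stage {
  st_T : finGroupType;
  st_G : {group st_T};
  st_R : {group st_T};
  st_Ds : nat -> {set st_T};
  st_Gs : nat -> {set st_T};
  st_Rs : nat -> {set st_T} }.

Definition next_stage (n : nat) (s : stage) (mT : finGroupType) (M : {group mT}) : stage :=
  let G := st_G s in
  let e := @emb _ G _ M in
  let D := @newD _ G _ M (st_R s) in
  let Gn := @newG _ G _ M (st_R s) in
  let Rn := @newR _ G _ M (st_R s) in
  @Stage (@Qt _ G _ M) Gn Rn
    (fun j => if j == n then gval D else e @: st_Ds s j)
    (fun j => if j == n then gval Gn else e @: st_Gs s j)
    (fun j => if j == n then gval Rn else e @: st_Rs s j).

Fixpoint tower (gT1 : finGroupType) (G1 : {group gT1})
  (mT : nat -> finGroupType) (M : forall n, {group mT n}) (m : nat) : stage :=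
  match m with
  | 0 => @Stage gT1 G1 G1 (fun _ => 1) (fun _ => G1) (fun _ => G1)
  | m'.+1 => next_stage m.+1 (tower G1 M m') (M m.+1)
  end.

Definition extra_special (p : nat) (gT : finGroupType) (P : {set gT}) : bool :=
  [&& p.-group P, P^`(1) == 'Z(P) & #|'Z(P)| == p].

From HB Require Import structures.
From mathcomp Require Import all_boot all_order all_fingroup all_solvable.
From mathcomp Require Import zify.
Set Implicit Arguments. Unset Strict Implicit. Unset Printing Implicit Defensive.
Local Open Scope group_scope.

(* Each layer of the tower is a split extension G_j = D_j ⋊ G_{j-1}, where D_j is a
   p_j-group and D_j = [D_j, R_{j-1}]: the p_{j-1}-group R_{j-1} acts coprimely on
   the p_j-group B_j, so [B_j, R, R] = [B_j, R].  Then T_{j+1} = D_{j+1} T_j inherits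
   normality and the complement G_{k-1} from the factorisations G_{j+1} = D_{j+1} G_j
   and G_j = T_j G_{k-1}, while [T_{j+1}, R_{k-1}] contains T_j ⊇ D_j ⊇ R_j = D_j',
   hence also [D_{j+1}, R_j] = D_{j+1}.  Earlier layers are carried into the later
   groups by the injective embeddings G_{j-1} -> G_j. *)

Lemma coprime_commGid (gT : finGroupType) (G A : {group gT}) :
  A \subset 'N(G) -> coprime #|G| #|A| -> solvable G -> [~: G, A, A] = [~: G, A].
Proof.
move=> nGA coGA solG; set H := [~: G, A].
have sHG : H \subset G by rewrite commg_subl.
have nHA : A \subset 'N(H) := commg_normr A G.
have coHA : coprime #|H| #|A| := coprimeSg sHG coGA.
have defG : G \subset H * 'C_G(A).
  rewrite -quotientSK ?commg_norml // coprime_norm_quotient_cent ?(solvableS sHG) //.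
  by rewrite subsetI subxx quotient_cents2r.
have nHAC : 'C_G(A) \subset 'N([~: H, A]).
  apply: normsR; first exact: subset_trans (subsetIl _ _) (commg_norml G A).
  exact: subset_trans (subsetIr _ _) (cent_sub A).
apply/eqP; rewrite eqEsubset commSg //= gen_subG.
apply/subsetP=> _ /imset2P[g a Gg Aa ->].
have [h c Hh Cc ->] := mulsgP (subsetP defG g Gg).
have cAc : c \in 'C(A) := subsetP (subsetIr G _) c Cc.
rewrite commMgJ (_ : [~ c, a] = 1) ?mulg1; last by apply/eqP/commgP/(centP cAc).
by rewrite memJ_norm ?mem_commg // (subsetP nHAC).
Qed.

Definition chain_node (gT : finGroupType) (Gj Rj : {set gT}) : Prop :=
  [/\ group_set Gj, group_set Rj & Rj <| Gj].

Definition chain_link (gT : finGroupType) (D Gp Gj Rp Rj : {set gT}) : Prop :=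
  [/\ group_set D, D <| Gj, D :&: Gp = 1, D * Gp = Gj & [~: D, Rp] = D /\ Rj = D^`(1)].

Section WreathStep.
Variables (sT : finGroupType) (G : {group sT}) (mT : finGroupType) (M : {group mT}).

Local Notation to := (wr_gaction G M).
Local Notation B := (sdpair1 to @* [set: Bt G M]).
Local Notation H := (sdpair2 to @* [set: Xt G]).
Local Notation K := [~: B^`(1), H].

Lemma wrK_sub_base : K \subset B.
Proof.
apply: subset_trans (der_sub 1 B); rewrite commg_subl.
exact: char_norm_trans (der_char 1 B) (im_sdpair_norm to).
Qed.

Lemma emb_morphic : morphic G (emb G M).
Proof.
apply/morphicP=> x y Gx Gy; rewrite /emb subgM // morphM ?inE //.
by rewrite morphM // (subsetP (commg_normr _ _)) ?mem_morphim ?inE.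
Qed.

Definition emb_morphism := morphm_morphism emb_morphic.

Lemma emb_morphimE (X : {set sT}) : X \subset G -> emb G M @: X = emb_morphism @* X.
Proof. by move=> sXG; rewrite morphimEsub. Qed.

Lemma injm_emb : 'injm emb_morphism.
Proof.
apply/subsetP=> x /[dup] /dom_ker Gx /mker ex1.
have Hx : sdpair2 to (subg G x) \in H by rewrite mem_morphim ?inE.
have Kx := coset_idr (subsetP (commg_normr _ _) _ Hx) ex1.
have : sdpair2 to (subg G x) \in B :&: H by rewrite inE (subsetP wrK_sub_base _ Kx).
rewrite im_sdpair_TI inE => /eqP x1.
have : subg G x = 1.
  by apply: (injmP (injm_sdpair2 to)); rewrite ?inE // /= x1 morph1.
by move/(congr1 val); rewrite subgK // => ->; rewrite inE.
Qed.

Lemma emb_morphim_sub : emb_morphism @* G \subset H / K.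
Proof.
apply/subsetP=> _ /morphimP[x _ Gx ->]; rewrite /= /emb mem_quotient //.
by rewrite mem_morphim ?inE.
Qed.

Lemma card_wr_base : #|Bt G M| = (#|M| ^ #|G|)%N.
Proof.
have -> : #|G| = #|subg_of G| by rewrite card_sub.
have -> : #|M| = #|subg_of M| by rewrite card_sub.
have pow_foldr (c : nat) (e : seq (subg_of G)) : foldr muln 1%N [seq c | _ <- e] = (c ^ size e)%N.
  by elim: e => //= _ e ->; rewrite expnS.
by rewrite card_dep_ffun /image_mem pow_foldr -!cardT.
Qed.

Lemma pgroup_wr_base q : q.-group M -> q.-group B.
Proof.
move=> pM; apply: morphim_pgroup.
by move: pM; rewrite /pgroup cardsT card_wr_base pnatX => ->.
Qed.

Section NewLayer.
Variables (R : {group sT}) (q r : nat).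
Hypothesis nsRG : R <| G.

Local Notation E := (emb_morphism @* G).
Local Notation D := (newD G M R).

Lemma newDE : gval D = [~: B / K, emb_morphism @* R].
Proof. by rewrite /= emb_morphimE // normal_sub. Qed.

Lemma newGE : gval (newG G M R) = D <*> E.
Proof. by rewrite /= -emb_morphimE. Qed.

Lemma norm_wr_base_quo : E \subset 'N(B / K).
Proof.
apply: subset_trans emb_morphim_sub _.
exact: quotient_norms (im_sdpair_norm to).
Qed.

Lemma newD_sub : D \subset B / K.
Proof.
rewrite newDE commg_subl; apply: subset_trans norm_wr_base_quo.
exact: morphimS (normal_sub nsRG).
Qed.

Lemma newD_norm : E \subset 'N(D).
Proof.
rewrite newDE normsR ?norm_wr_base_quo //.
exact: normal_norm (morphim_normal _ nsRG).
Qed.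

Lemma newD_normal : D <| newG G M R.
Proof. by rewrite newGE normalYl newD_norm. Qed.

Lemma newD_TI : D :&: E = 1.
Proof.
apply/trivgP; apply: subset_trans (setISS newD_sub emb_morphim_sub) _.
by rewrite -quotientGI ?wrK_sub_base // im_sdpair_TI quotient1.
Qed.

Lemma newD_mul : D * E = newG G M R.
Proof. by rewrite newGE norm_joinEr // newD_norm. Qed.

Lemma pgroup_newD : q.-group M -> q.-group D.
Proof. by move=> pM; apply: pgroupS newD_sub (quotient_pgroup _ (pgroup_wr_base pM)). Qed.

Lemma newD_commE : q.-group M -> r.-group R -> r != q -> [~: D, emb_morphism @* R] = D.
Proof.
move=> pM rR neq_rq; have pBK := quotient_pgroup K (pgroup_wr_base pM).
rewrite newDE coprime_commGid ?(pgroup_sol pBK) //.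
  exact: subset_trans (morphimS _ (normal_sub nsRG)) norm_wr_base_quo.
apply: pnat_coprime pBK _; apply: sub_in_pnat (morphim_pgroup _ rR) => t _.
by rewrite !inE => /eqP ->.
Qed.

Lemma newG_chain_node : chain_node (newG G M R) (newR G M R).
Proof.
split; [exact: groupP | exact: groupP |].
exact: char_normal_trans (der_char 1 _) newD_normal.
Qed.

Lemma newD_chain_link : q.-group M -> r.-group R -> r != q ->
  chain_link (newD G M R) (emb G M @: G) (newG G M R) (emb G M @: R) (newR G M R).
Proof.
move=> pM rR neq_rq; rewrite !emb_morphimE ?normal_sub //.
split; [exact: groupP | exact: newD_normal | exact: newD_TI | exact: newD_mul |].
by split; first exact: newD_commE.
Qed.

End NewLayer.
End WreathStep.

Lemma big_rev_index_iotaSr (R : Type) (idx : R) (op : R -> R -> R) (F : nat -> R) (m n : nat) :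
  m <= n -> \big[op/idx]_(l <- rev (index_iota m n.+1)) F l
            = op (F n) (\big[op/idx]_(l <- rev (index_iota m n)) F l).
Proof.
by move=> le_mn; rewrite /index_iota subSn // -addn1 iotaD subnKC // cats1 rev_rcons big_cons.
Qed.

Section Chain.
Variable gT : finGroupType.

Lemma semidirect_chain_step (G H K D T R S : {group gT}) :
    D <| G -> D :&: H = 1 -> D * H = G ->
    T <| H -> T :&: K = 1 -> T * K = H ->
    R \subset K -> [~: T, R] = T -> S \subset T -> [~: D, S] = D ->
  [/\ group_set (D * T), D * T <| G, D * T :&: K = 1, D * T * K = G
    & [~: D * T, R] = D * T].
Proof.
move=> nsDG tiDH defG nsTH tiTK defH sRK cTR sST cDS.
have sHG : H \subset G by rewrite -defG mulG_subr.
have sKH : K \subset H by rewrite -defH mulG_subr.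
have sTH := normal_sub nsTH.
have nDH : H \subset 'N(D) := subset_trans sHG (normal_norm nsDG).
have defDT : D <*> T = D * T by rewrite norm_joinEr // (subset_trans sTH).
have nsDTG : D * T <| G.
  rewrite -defDT /normal join_subG (normal_sub nsDG) (subset_trans sTH sHG) /=.
  rewrite -{1}defG mul_subG ?(normsY nDH (normal_norm nsTH)) //.
  exact: subset_trans (joing_subl D T) (normG _).
split=> //; first by rewrite -defDT groupP.
- by rewrite -(setIidPr sKH) setIA (setIC _ H) -group_modr // (setIC H) tiDH mul1g.
- by rewrite -mulgA defH.
rewrite -defDT in nsDTG *; apply/eqP; rewrite eqEsubset commg_subl.
rewrite (subset_trans sRK) ?(subset_trans sKH) ?(subset_trans sHG) ?normal_norm //=.
have sTC : T \subset [~: D <*> T, R] by rewrite -{1}cTR commSg ?joing_subr.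
rewrite join_subG sTC andbT -{1}cDS.
apply: subset_trans (commgS D (subset_trans sST sTC)) _.
by rewrite commg_subr (subset_trans (joing_subl D T)) ?commg_norml.
Qed.

Lemma chain_node_morphim (rT : finGroupType) (A : {group gT}) (f : {morphism A >-> rT})
    (Gj Rj : {set gT}) :
  chain_node Gj Rj -> chain_node (f @* Gj) (f @* Rj).
Proof.
case=> gG gR nsRG; split; last exact: morphim_normal.
  exact: (groupP (f @* Group gG)%G).
exact: (groupP (f @* Group gR)%G).
Qed.

Lemma chain_link_morphim (rT : finGroupType) (A : {group gT}) (f : {morphism A >-> rT})
    (D Gp Gj Rp Rj : {set gT}) :
    'injm f -> Gj \subset A -> Rp \subset A -> chain_link D Gp Gj Rp Rj ->
  chain_link (f @* D) (f @* Gp) (f @* Gj) (f @* Rp) (f @* Rj).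
Proof.
move=> injf sGA sRA [gD nsDG tiDG defG [cDR ->]]; pose DD := Group gD.
have sDA : D \subset A := subset_trans (normal_sub nsDG) sGA.
split; first exact: (groupP (f @* DD)%G).
- exact: morphim_normal.
- by rewrite -injmI // tiDG morphim1.
- by rewrite -morphimMl // defG.
split; first by rewrite -morphimR // cDR.
exact: (morphim_der f 1 (G := DD) sDA).
Qed.

Variables (Ds Gs Rs : nat -> {set gT}) (k n : nat).
Hypothesis nodes : forall j, 0 < j <= n -> chain_node (Gs j) (Rs j).
Hypothesis links : forall j, 1 < j <= n ->
  chain_link (Ds j) (Gs j.-1) (Gs j) (Rs j.-1) (Rs j).
Hypothesis k_gt1 : 1 < k.

Local Notation T j := (\prod_(l <- rev (index_iota k j.+1)) Ds l).

Lemma chain_prod j : k <= j <= n ->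
  [/\ group_set (T j), T j <| Gs j, T j :&: Gs k.-1 = 1, T j * Gs k.-1 = Gs j
    & [~: T j, Rs k.-1] = T j /\ Ds j \subset T j].
Proof.
elim: j => [|j IH /andP[]]; first by case/andP=> /(leq_trans k_gt1).
rewrite leq_eqVlt => /predU1P[<- le_kn | lt_kj lt_jn].
  rewrite big_rev_index_iotaSr // /index_iota subnn big_nil mulg1.
  by have [gD nsDG tiDG defG [cDR _]] := links (j := k) ltac:(lia).
rewrite big_rev_index_iotaSr ?(ltnW lt_kj) //.
have [gTj nsTG tiTK defTG [cTR sDT]] := IH ltac:(lia).
have [gD nsDG tiDG defG [cDR _]] := links (j := j.+1) ltac:(lia).
have [gGj gRj _] := nodes (j := j) ltac:(lia).
have [gGj1 _ _] := nodes (j := j.+1) ltac:(lia).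
have [gGk gRk nsRGk] := nodes (j := k.-1) ltac:(lia).
have [gDj _ _ _ [_ defRj]] := links (j := j) ltac:(lia).
have sRT : Rs j \subset T j by rewrite defRj (subset_trans (der_sub 1 (Group gDj))).
have [] := semidirect_chain_step (G := Group gGj1) (H := Group gGj) (K := Group gGk)
  (D := Group gD) (T := Group gTj) (R := Group gRk) (S := Group gRj)
  nsDG tiDG defG nsTG tiTK defTG (normal_sub nsRGk) cTR sRT cDR.
by move=> *; split=> //; split=> //; apply: (mulG_subl (Group gTj)).
Qed.
End Chain.

Definition tower_spec (p : nat -> nat) (n : nat) (s : stage) : Prop :=
  [/\ st_Gs s n = st_G s, st_Rs s n = st_R s, (p n).-group (st_R s),
      forall j, 0 < j <= n -> chain_node (st_Gs s j) (st_Rs s j) /\ st_Gs s j \subset st_G s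
    & forall j, 1 < j <= n ->
        chain_link (st_Ds s j) (st_Gs s j.-1) (st_Gs s j) (st_Rs s j.-1) (st_Rs s j)].

Lemma tower_spec_next_stage (p : nat -> nat) (n : nat) (s : stage)
    (mT : finGroupType) (M : {group mT}) :
    0 < n -> (p n.+1).-group M -> p n != p n.+1 -> tower_spec p n s ->
  tower_spec p n.+1 (next_stage n.+1 s M).
Proof.
case: s => T G R Ds Gs Rs n_gt0 pM neq_p [/= eGn eRn pR nodes links].
have [[_ _ nsRG] _] := nodes n ltac:(lia).
rewrite eGn eRn in nsRG.
set f := emb_morphism G M; have injf : 'injm f := injm_emb G M.
have sfGG : f @* G \subset newG G M R by rewrite newGE joing_subr.
(* An explicit [cbn] list keeps [newD], [newG] and [newR] folded. *)
rewrite /tower_spec; cbn [st_G st_R st_Gs st_Rs st_Ds next_stage].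
split; rewrite ?eqxx //.
- exact: pgroupS (der_sub 1 _) (pgroup_newD nsRG pM).
- move=> j /andP[j_gt0]; rewrite leq_eqVlt => /predU1P[-> | lt_jn].
    by rewrite eqxx; split; [exact: newG_chain_node nsRG |].
  rewrite (ltn_eqF lt_jn); have [nodej sGjG] := nodes j ltac:(lia); have [_ _ nsRGj] := nodej.
  rewrite !emb_morphimE ?(subset_trans (normal_sub nsRGj)) //.
  split; first exact: chain_node_morphim.
  exact: subset_trans (morphimS f sGjG) sfGG.
move=> j /andP[j_gt1]; rewrite leq_eqVlt => /predU1P[-> | lt_jn].
  rewrite eqxx (ltn_eqF (ltnSn n)) eGn eRn.
  exact: newD_chain_link nsRG pM pR neq_p.
rewrite (ltn_eqF lt_jn) (ltn_eqF (leq_ltn_trans (leq_pred j) lt_jn)).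
have linkj := links j ltac:(lia); have [_ nsDGj _ _ _] := linkj.
have [[_ _ nsRGj] sGjG] := nodes j ltac:(lia).
have [[_ _ nsRGp] sGpG] := nodes j.-1 ltac:(lia).
have sRpG := subset_trans (normal_sub nsRGp) sGpG.
rewrite !emb_morphimE ?(subset_trans (normal_sub nsDGj)) ?(subset_trans (normal_sub nsRGj)) //.
exact: chain_link_morphim injf sGjG sRpG linkj.
Qed.

Lemma tower_spec_tower (p : nat -> nat) (gT1 : finGroupType) (G1 : {group gT1})
    (mT : nat -> finGroupType) (M : forall n, {group mT n}) :
    (p 1%N).-group G1 -> (forall n, 1 < n -> (p n).-group (M n)) ->
    (forall n, 0 < n -> p n.+1 != p n) ->
  forall m, tower_spec p m.+1 (tower G1 M m).
Proof.
move=> pG1 pM neq_p; elim=> [|m IH].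
  split=> // j j_range; last by exfalso; lia.
  by split=> //; split; [exact: groupP | exact: groupP | exact: normal_refl].
apply: tower_spec_next_stage => //; first exact: pM.
by rewrite eq_sym neq_p.
Qed.

Unset Implicit Arguments.

Theorem lemma2p6
  (p : nat -> nat)
  (p_prime : forall n, 0 < n -> prime (p n))
  (p_neq : forall n, 0 < n -> p n.+1 != p n)
  (gT1 : finGroupType) (G1 : {group gT1})
  (G1_cyclic : cyclic G1) (G1_order : #|G1| = p 1%N)
  (mT : nat -> finGroupType) (M : forall n, {group mT n})
  (M_es : forall n, 1 < n -> extra_special (p n) (M n) /\ #|M n| = (p n ^ 3)%N)
  (i : nat) (hi : 1 < i) :
  let s := tower G1 M i.-1 in
  forall k, 1 < k <= i ->
  let T := (\prod_(j <- rev (index_iota k i.+1)) st_Ds s j)%g in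
  [/\ group_set T /\ T <| st_G s,
      T :&: st_Gs s k.-1 = 1 /\ T * st_Gs s k.-1 = st_G s
    & [~: T, st_Rs s k.-1] = T].
Proof.
move=> s k /andP[k_gt1 le_ki] T.
have pG1 : (p 1%N).-group G1 by rewrite /pgroup G1_order pnat_id ?p_prime.
have pM n : 1 < n -> (p n).-group (M n) by case/M_es=> /and3P[].
have [eGi _ _ nodes links] : tower_spec p i s.
  by rewrite /s -{1}(prednK (ltnW hi)); exact: tower_spec_tower.
have nodes' j : 0 < j <= i -> chain_node (st_Gs s j) (st_Rs s j) by case/nodes.
have [gT nsTG tiTG defG [cTR _]] := chain_prod nodes' links k_gt1 (j := i) ltac:(lia).
by rewrite -eGi.
Qed.
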